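(* Let $(A_1,X_1)$ and $(A_2,X_2)$ be two graphs that cannot be distinguished by the 1-WL algorithm. Then any Graph U-Net-th network computes the same vector representation for them.
   Context: A graph is given by a symmetric adjacency matrix $A$ (possibly a multigraph with nonnegative integer entries) and node features $X$. The 1-WL (color refinement) algorithm starts from initial colors given by node features and iteratively recolors each node by (its current color, multiset of neighbors' current colors, counted with multiplicity) until stable. Two graphs ''cannot be distinguished by the 1-WL algorithm'' means: running 1-WL on their disjoint union, every stable color class contains the same number of nodes from each graph. A node-level map is 1-WL-bounded if the representation it assigns to a node depends only on the node's stable 1-WL color (computed on the disjoint union of the graphs under consideration); standard message-passing GNN layers are of this type. A Graph U-Net-th pooling layer, with fixed projection vector $p$, threshold $\beta\in\mathbb{R}$ and fixed integer $\ell\ge1$, maps an input $(A,H)$ to $(A^\ell[b,b],\,H[b])$, where $v=Hp$, $b$ is the indicator vector $b_i=1[v_i\ge\beta]$, and $M[b,b]$, $H[b]$ denote restriction to rows/columns with $b_i=1$. A Graph U-Net-th network alternates 1-WL-bounded GNN layers (applied to the current (multi)graph and features) with such pooling layers, and ends with a permutation-invariant readout of the final node representations. *)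

(* Graphs are given on an arbitrary finite node type V:
   a (multi)graph is an adjacency function A : V -> V -> nat (entry A u v =
   number of edges between u and v), node features are H : V -> 'rV[R]_d
   (row i of the feature matrix). *)
From HB Require Import structures.
From mathcomp Require Import all_boot all_order all_algebra.
From mathcomp Require Import boolp reals.
Set Implicit Arguments. Unset Strict Implicit. Unset Printing Implicit Defensive.
Import Order.TTheory GRing.Theory Num.Theory.
Local Open Scope ring_scope.

Section Defs.
Variable R : realType.

Definition adj_sym (V : finType) (A : V -> V -> nat) : Prop :=
  forall u v, A u v = A v u.

(** 1-WL colour refinement, colours represented by the partition they induce:
    [wl_rel A X t x y] <-> x and y have the same colour after t rounds.  Round t+1: same colour at round t and the
    same multiset of neighbours' round-t colours counted with multiplicity,
    i.e. for every round-t colour class (class of some w), the number of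
    edges (with multiplicity) from x into that class equals that from y. *)
Fixpoint wl_rel (V : finType) (d : nat) (A : V -> V -> nat)
    (X : V -> 'rV[R]_d) (t : nat) : rel V :=
  match t with
  | 0 => fun x y => X x == X y
  | t.+1 => fun x y =>
      wl_rel A X t x y &&
      [forall w, (\sum_(u | wl_rel A X t u w) A x u ==
                  \sum_(u | wl_rel A X t u w) A y u)%N]
  end.

(** stable 1-WL colouring: the partition reached once refinement stabilises
    (refinement is monotone, so this is the intersection over all rounds). *)
Definition wl_stable (V : finType) (d : nat) (A : V -> V -> nat)
    (X : V -> 'rV[R]_d) : rel V :=
  fun x y => `[< forall t, wl_rel A X t x y >].

Definition union_adj (V1 V2 : finType) (A1 : V1 -> V1 -> nat)
    (A2 : V2 -> V2 -> nat) : (V1 + V2)%type -> (V1 + V2)%type -> nat :=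
  fun x y => match x, y with
             | inl a, inl b => A1 a b
             | inr a, inr b => A2 a b
             | _, _ => 0%N
             end.

Definition union_feat (V1 V2 : finType) (T : Type) (X1 : V1 -> T)
    (X2 : V2 -> T) : (V1 + V2)%type -> T :=
  fun x => match x with inl a => X1 a | inr b => X2 b end.

(** (A1,X1) and (A2,X2) cannot be distinguished by 1-WL: on the disjoint
    union, every stable colour class has as many nodes from each graph. *)
Definition wl_indist (V1 V2 : finType) (d : nat)
    (A1 : V1 -> V1 -> nat) (X1 : V1 -> 'rV[R]_d)
    (A2 : V2 -> V2 -> nat) (X2 : V2 -> 'rV[R]_d) : Prop :=
  let A := union_adj A1 A2 in
  let X := union_feat X1 X2 in
  forall w : (V1 + V2)%type,
    #|[pred a : V1 | wl_stable A X (inl a) w]| =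
    #|[pred b : V2 | wl_stable A X (inr b) w]|.

Definition layer_fn (d d' : nat) :=
  forall V : finType, (V -> V -> nat) -> (V -> 'rV[R]_d) -> V -> 'rV[R]_d'.

Definition wl_bounded (d d' : nat) (f : layer_fn d d') : Prop :=
  forall (V1 V2 : finType) (A1 : V1 -> V1 -> nat) (X1 : V1 -> 'rV[R]_d)
         (A2 : V2 -> V2 -> nat) (X2 : V2 -> 'rV[R]_d),
    adj_sym A1 -> adj_sym A2 ->
    forall x y : (V1 + V2)%type,
      wl_stable (union_adj A1 A2) (union_feat X1 X2) x y ->
      union_feat (f V1 A1 X1) (f V2 A2 X2) x =
      union_feat (f V1 A1 X1) (f V2 A2 X2) y.

Definition readout_fn (d k : nat) :=
  forall V : finType, (V -> 'rV[R]_d) -> 'rV[R]_k.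

Definition perm_invariant (d k : nat) (r : readout_fn d k) : Prop :=
  forall (V1 V2 : finType) (g : V1 -> V2), bijective g ->
    forall H : V2 -> 'rV[R]_d, r V1 (H \o g) = r V2 H.

Fixpoint apow (V : finType) (A : V -> V -> nat) (l : nat) : V -> V -> nat :=
  match l with
  | 0 => fun u v => nat_of_bool (u == v)
  | l.+1 => fun u v => (\sum_w apow A l u w * A w v)%N
  end.

Definition pool_keep (V : finType) (d : nat) (p : 'cV[R]_d) (beta : R)
    (H : V -> 'rV[R]_d) : pred V :=
  fun i => beta <= (H i *m p) 0 0.

(** Graph U-Net-th networks with input dimension d, output dimension k. *)
Inductive unet (k : nat) : nat -> Type :=
| UReadout d : readout_fn d k -> unet k d
| UGNN d d' : layer_fn d d' -> unet k d' -> unet k d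
| UPool d : 'cV[R]_d -> R -> nat -> unet k d -> unet k d.

Fixpoint unet_ok (k d : nat) (N : unet k d) : Prop :=
  match N with
  | UReadout _ r => perm_invariant r
  | UGNN _ _ f N' => wl_bounded f /\ unet_ok N'
  | UPool _ _ _ l N' => (1 <= l)%N /\ unet_ok N'
  end.

Fixpoint unet_eval (k d : nat) (N : unet k d) :
    forall V : finType, (V -> V -> nat) -> (V -> 'rV[R]_d) -> 'rV[R]_k :=
  match N in unet _ d return
        forall V : finType, (V -> V -> nat) -> (V -> 'rV[R]_d) -> 'rV[R]_k with
  | UReadout _ r => fun V A H => r V H
  | UGNN _ _ f N' => fun V A H => unet_eval N' A (f V A H)
  | UPool _ p beta l N' => fun V A H =>
      @unet_eval _ _ N' {i : V | pool_keep p beta H i}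
        (fun i j => apow A l (val i) (val j)) (fun i => H (val i))
  end.

End Defs.

From mathcomp Require Import all_boot all_algebra all_fingroup.
From mathcomp Require Import boolp reals.
Set Implicit Arguments. Unset Strict Implicit. Unset Printing Implicit Defensive.

(* Work on the disjoint union.  Indistinguishability says that the
   indicators of the two node sets have equal sums over every stable 1-WL
   class, and equal class sums persist to every coarser equivalence.  The
   stable partition is the coarsest equitable partition compatible with the
   features.  A 1-WL-bounded layer produces features constant on the old
   stable classes, so the old stable partition is finer than the new one.
   A partition equitable for A is equitable for A^l, and pooling keeps a
   union of stable classes (nodes are kept according to their features), so
   the old stable partition restricted to the kept nodes is equitable for the
   pooled graph and again finer than its stable partition.  At the readout,
   equal counts of every feature value give a bijection between the node sets
   transporting the features, and permutation invariance concludes. *)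

Definition eq_class_sums (U : finType) (r : rel U) (F G : U -> nat) :=
  forall w, (\sum_(u | r u w) F u = \sum_(u | r u w) G u)%N.

Definition equitable (U : finType) (A : U -> U -> nat) (r : rel U) :=
  forall x y, r x y -> eq_class_sums r (A x) (A y).

Section ClassSums.
Variables (U : finType) (r : rel U).
Hypothesis r_equiv : equivalence_rel r.

Lemma equiv_refl : reflexive r.
Proof. by move=> x; rewrite (r_equiv x x x). Qed.

Lemma equiv_sym : symmetric r.
Proof.
suff sym x y : r x y -> r y x by move=> x y; apply/idP/idP; apply: sym.
by move=> rxy; rewrite -(r_equiv x y x).2 // equiv_refl.
Qed.

Lemma eq_class_sums_weighted (F G h : U -> nat) :
  eq_class_sums r F G -> (forall u v, r u v -> h u = h v) ->
  (\sum_u F u * h u = \sum_u G u * h u)%N.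
Proof.
move=> eqFG h_inv.
pose rep u := odflt u [pick v | r v u].
have rep_rel u : r (rep u) u.
  by rewrite /rep; case: pickP => [v //|/(_ u)]; rewrite equiv_refl.
have eq_rep u v : (rep u == rep v) = r u v.
  apply/eqP/idP => [rep_uv|ruv].
    by have := rep_rel u; rewrite rep_uv => /(r_equiv _ u v).2 <-.
  rewrite /rep (@eq_pick _ _ (r^~ v)) => [|z /=]; last first.
    by rewrite !(equiv_sym z) (r_equiv u v z).2.
  by case: pickP => // /(_ v); rewrite equiv_refl.
have class_sum (H : U -> nat) j : rep j == j ->
    (\sum_(u | true && (rep u == j)) H u * h u = (\sum_(u | r u j) H u) * h j)%N.
  move=> /eqP rep_j; rewrite big_distrl /=.
  have rep_class u : (rep u == j) = r u j by rewrite -{1}rep_j eq_rep.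
  by apply: eq_big => [u|u]; rewrite /= rep_class // => /h_inv ->.
rewrite (partition_big rep [pred j | rep j == j]) => [|u _]; last first.
  by rewrite /= eq_rep rep_rel.
rewrite [RHS](partition_big rep [pred j | rep j == j]) => [|u _]; last first.
  by rewrite /= eq_rep rep_rel.
by apply: eq_bigr => j rep_j; rewrite !class_sum // eqFG.
Qed.

Lemma eq_class_sums_closed (F G : U -> nat) (S : pred U) :
  eq_class_sums r F G -> (forall u v, r u v -> S u = S v) ->
  (\sum_(u | S u) F u = \sum_(u | S u) G u)%N.
Proof.
move=> eqFG S_inv.
have sum_ind (H : U -> nat) : (\sum_(u | S u) H u = \sum_u H u * S u)%N.
  by rewrite big_mkcond; apply: eq_bigr => u _; case: (S u); rewrite ?muln1 ?muln0.
by rewrite !sum_ind; apply: eq_class_sums_weighted => // u v /S_inv ->.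
Qed.

Lemma eq_class_sums_coarser (r' : rel U) (F G : U -> nat) :
  equivalence_rel r' -> subrel r r' ->
  eq_class_sums r F G -> eq_class_sums r' F G.
Proof.
move=> r'_equiv r_sub eqFG w; apply: eq_class_sums_closed => // u v /r_sub.
exact: (r'_equiv u v w).2.
Qed.

End ClassSums.

Section Restriction.
Variables (U U' : finType) (r : rel U) (e : U' -> U).
Hypotheses (r_equiv : equivalence_rel r) (e_inj : injective e).
Hypothesis codom_closed : forall u x, r u (e x) -> u \in codom e.

Let r' : rel U' := fun x y => r (e x) (e y).

Lemma equiv_restrict : equivalence_rel r'.
Proof. by move=> x y z; apply: r_equiv. Qed.

Lemma sum_restrict_class (F : U -> nat) w :
  (\sum_(x | r' x w) F (e x) = \sum_(u | r u (e w)) F u)%N.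
Proof.
rewrite [RHS](reindex_omap e (fun u => [pick x | e x == u])) => [|u ruw].
  apply: eq_bigl => x; case: pickP => [y /eqP/e_inj ->|/(_ x)]; last first.
    by rewrite eqxx.
  by rewrite eqxx andbT.
case: pickP => [x /eqP <- //|none].
by have /codomP [y uy] := codom_closed ruw; move: (none y); rewrite -uy eqxx.
Qed.

Lemma eq_class_sums_restrict (F G : U -> nat) :
  eq_class_sums r F G -> eq_class_sums r' (F \o e) (G \o e).
Proof. by move=> eqFG w; rewrite /= !sum_restrict_class. Qed.

Lemma equitable_restrict (A : U -> U -> nat) :
  equitable A r -> equitable (fun x y => A (e x) (e y)) r'.
Proof. by move=> rA x y rxy; apply: eq_class_sums_restrict; apply: rA. Qed.

End Restriction.

Lemma sum_eqb (U : finType) (P : pred U) x :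
  (\sum_(u | P u) nat_of_bool (x == u) = P x)%N.
Proof.
have [Px|nPx] := boolP (P x).
  rewrite (bigD1 x) //= eqxx big1 // => u /andP[_ /negbTE].
  by rewrite eq_sym => ->.
by rewrite big1 // => u Pu; case: eqP => // xu; rewrite xu Pu in nPx.
Qed.

Section Powers.
Variables (U : finType) (A : U -> U -> nat).

Lemma apowS l u v : apow A l.+1 u v = (\sum_w A u w * apow A l w v)%N.
Proof.
elim: l u v => [|l IH] u v.
  rewrite /= (bigD1 u) //= eqxx mul1n big1 ?addn0; last first.
    by move=> w /negbTE; rewrite eq_sym => ->.
  rewrite (bigD1 v) //= eqxx muln1 big1 ?addn0 //.
  by move=> w /negbTE ->; rewrite muln0.
change (apow A l.+2 u v) with (\sum_w apow A l.+1 u w * A w v)%N.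
rewrite (eq_bigr (fun w => \sum_z A u z * apow A l z w * A w v)%N).
  rewrite exchange_big; apply: eq_bigr => z _.
  by rewrite /= big_distrr; apply: eq_bigr => w _; rewrite -mulnA.
by move=> w _; rewrite IH big_distrl.
Qed.

Lemma apow_sym l : adj_sym A -> adj_sym (apow A l).
Proof.
move=> A_sym; elim: l => [|l IH] u v; first by rewrite /= eq_sym.
by rewrite apowS /=; apply: eq_bigr => w _; rewrite IH A_sym mulnC.
Qed.

Lemma equitable_apow (r : rel U) l :
  equivalence_rel r -> equitable A r -> equitable (apow A l) r.
Proof.
move=> r_equiv rA; elim: l => [|l IH] x y rxy w.
  by rewrite !sum_eqb (r_equiv x y w).2.
have expand x' : (\sum_(v | r v w) apow A l.+1 x' v =
    \sum_z apow A l x' z * \sum_(v | r v w) A z v)%N.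
  by rewrite /= exchange_big; apply: eq_bigr => z _; rewrite big_distrr.
rewrite !expand; apply: eq_class_sums_weighted (IH x y rxy) _ => // u v ruv.
exact: rA.
Qed.

End Powers.

Lemma apow_union (V1 V2 : finType) (A1 : V1 -> V1 -> nat)
  (A2 : V2 -> V2 -> nat) l x y :
  apow (union_adj A1 A2) l x y = union_adj (apow A1 l) (apow A2 l) x y.
Proof.
have sum_mul0 (I : finType) (F : I -> nat) : (\sum_i F i * 0 = 0)%N.
  by rewrite big1 // => i _; rewrite muln0.
elim: l x y => [|l IH] [a|a] [b|b] //=; rewrite big_sumType /=.
- by rewrite sum_mul0 addn0; apply: eq_bigr => c _; rewrite IH.
- by rewrite sum_mul0 add0n big1 // => c _; rewrite IH /= mul0n.
- by rewrite sum_mul0 addn0 big1 // => c _; rewrite IH /= mul0n.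
- by rewrite sum_mul0 add0n; apply: eq_bigr => c _; rewrite IH.
Qed.

Section WL.
Variables (R : realType) (U : finType) (d : nat) (A : U -> U -> nat)
  (X : U -> 'rV[R]_d).

Lemma wl_rel_equiv t : equivalence_rel (wl_rel A X t).
Proof.
elim: t => [|t IH] x y z /=; first by split=> // /eqP ->.
split; first by rewrite (IH z z z).1; apply/forallP.
case/andP=> rxy /forallP sxy; rewrite (IH x y z).2 //; congr andb.
by apply: eq_forallb => w; rewrite (eqP (sxy w)).
Qed.

Lemma wl_rel_mono t t' : (t <= t')%N -> subrel (wl_rel A X t') (wl_rel A X t).
Proof.
move=> /subnK <-; elim: (t' - t)%N => [//|n IH] x y.
by rewrite addSn => /andP[/IH].
Qed.

Lemma wl_stable_rel t : subrel (wl_stable A X) (wl_rel A X t).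
Proof. by move=> x y /asboolP. Qed.

Lemma wl_stable_feat x y : wl_stable A X x y -> X x = X y.
Proof. by move/(wl_stable_rel 0)/eqP. Qed.

Lemma wl_stable_equiv : equivalence_rel (wl_stable A X).
Proof.
move=> x y z; split; first by apply/asboolP => t; rewrite (wl_rel_equiv t z z z).1.
move=> sxy; rewrite /wl_stable /=; congr asbool; apply: eq_forall => t.
by rewrite (wl_rel_equiv t x y z).2 // wl_stable_rel.
Qed.

(* Finitely many pairs each get separated at some finite round, if ever. *)
Lemma wl_rel_stabilizes : exists T, wl_rel A X T =2 wl_stable A X.
Proof.
have /choice [tp tpP] : forall p : U * U,
    exists t, wl_rel A X t p.1 p.2 -> wl_stable A X p.1 p.2.
  move=> p; have [|/asboolPn/existsNP [t nr]] := boolP (wl_stable A X p.1 p.2).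
    by exists 0%N.
  by exists t => /nr [].
exists (\max_p tp p) => x y; apply/idP/idP => [|/wl_stable_rel//].
by move=> /(wl_rel_mono (leq_bigmax (x, y)))/(tpP (x, y)).
Qed.

Lemma wl_stable_equitable : equitable A (wl_stable A X).
Proof.
have [T wlT] := wl_rel_stabilizes.
move=> x y /(wl_stable_rel T.+1) /andP[_ /forallP eqT] w.
by rewrite -!(eq_bigl _ _ (wlT^~ w)) (eqP (eqT w)).
Qed.

Lemma equitable_sub_wl_stable (r : rel U) :
  equivalence_rel r -> (forall x y, r x y -> X x = X y) -> equitable A r ->
  subrel r (wl_stable A X).
Proof.
move=> r_equiv rX rA x y rxy; apply/asboolP => t.
elim: t x y rxy => [|t IH] x y rxy /=; first by rewrite (rX _ _ rxy).
rewrite IH //=; apply/forallP => w; apply/eqP.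
exact: (eq_class_sums_coarser r_equiv (wl_rel_equiv t) IH (rA _ _ rxy)).
Qed.

End WL.

Definition ind_inl (V1 V2 : finType) (u : (V1 + V2)%type) : nat :=
  if u is inl _ then 1%N else 0%N.
Definition ind_inr (V1 V2 : finType) (u : (V1 + V2)%type) : nat :=
  if u is inr _ then 1%N else 0%N.
Arguments ind_inl {V1 V2} u.
Arguments ind_inr {V1 V2} u.

Lemma card_inl (V1 V2 : finType) (P : pred (V1 + V2)%type) :
  #|[pred a : V1 | P (inl a)]| = (\sum_(u | P u) ind_inl u)%N.
Proof. by rewrite big_sumType /= [X in (_ + X)%N]big1 // addn0 -sum1_card. Qed.

Lemma card_inr (V1 V2 : finType) (P : pred (V1 + V2)%type) :
  #|[pred b : V2 | P (inr b)]| = (\sum_(u | P u) ind_inr u)%N.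
Proof. by rewrite big_sumType /= [X in (X + _)%N]big1 // add0n -sum1_card. Qed.

Definition pool_embed (V1 V2 : finType) (K1 : pred V1) (K2 : pred V2)
  (x : ({i | K1 i} + {i | K2 i})%type) : (V1 + V2)%type :=
  match x with inl i => inl (val i) | inr j => inr (val j) end.
Arguments pool_embed {V1 V2} K1 K2 x.

Lemma pool_embed_inj (V1 V2 : finType) (K1 : pred V1) (K2 : pred V2) :
  injective (pool_embed K1 K2).
Proof. by move=> [x|x] [y|y] //= [/val_inj ->]. Qed.

Lemma pool_embed_codom (V1 V2 : finType) (K1 : pred V1) (K2 : pred V2) u :
  union_feat K1 K2 u -> u \in codom (pool_embed K1 K2).
Proof.
by case: u => [a|b] Ku; apply/codomP; [exists (inl (Sub a Ku))|exists (inr (Sub b Ku))].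
Qed.

Lemma count_codom (T : finType) (T' : Type) (f : T -> T') (q : pred T') :
  count q (codom f) = #|[pred x | q (f x)]|.
Proof. by rewrite codomE count_map cardE -size_filter enumT. Qed.

Lemma perm_codom_bij (V1 V2 : finType) (T : eqType) (f1 : V1 -> T) (f2 : V2 -> T) :
  perm_eq (codom f1) (codom f2) -> exists2 g : V1 -> V2, bijective g & f1 =1 f2 \o g.
Proof.
move=> pf.
have card12 : #|V1| = #|V2| by rewrite -(size_codom f1) -(size_codom f2) (perm_size pf).
have /tuple_permP [s codom_s] : perm_eq (codom f1) (codom_tuple f2) by [].
pose g a := enum_val (s (cast_ord card12 (enum_rank a))).
exists g.
  exists (fun b => enum_val (cast_ord (esym card12) ((s^-1)%g (enum_rank b)))) => x.
    by rewrite /g enum_valK permK cast_ordK enum_rankK.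
  by rewrite /g enum_valK cast_ordKV permKV enum_rankK.
move=> a; have := congr1 (fun t => nth (f1 a) t (enum_rank a)) codom_s.
rewrite /codom nth_image enum_rankK => ->.
rewrite (_ : nat_of_ord (enum_rank a) = cast_ord card12 (enum_rank a)) //.
by rewrite -tnth_nth tnth_mktuple (tnth_nth (f1 a)) /= /codom nth_image.
Qed.

Lemma wl_indistE (R : realType) (V1 V2 : finType) (d : nat)
  (A1 : V1 -> V1 -> nat) (X1 : V1 -> 'rV[R]_d)
  (A2 : V2 -> V2 -> nat) (X2 : V2 -> 'rV[R]_d) :
  wl_indist A1 X1 A2 X2 <->
  eq_class_sums (wl_stable (union_adj A1 A2) (union_feat X1 X2)) ind_inl ind_inr.
Proof.
set r := wl_stable _ _; rewrite /wl_indist /=; split=> indist w; move: (indist w);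
  by rewrite (card_inl (r ^~ w)) (card_inr (r ^~ w)).
Qed.

Section Union.
Variables (R : realType) (V1 V2 : finType) (d : nat)
  (A1 : V1 -> V1 -> nat) (X1 : V1 -> 'rV[R]_d)
  (A2 : V2 -> V2 -> nat) (X2 : V2 -> 'rV[R]_d).

Local Notation A := (union_adj A1 A2).
Local Notation X := (union_feat X1 X2).

Lemma wl_indist_feat_count : wl_indist A1 X1 A2 X2 ->
  forall q : pred 'rV[R]_d, #|[pred a | q (X1 a)]| = #|[pred b | q (X2 b)]|.
Proof.
move=> /wl_indistE indist q.
rewrite (card_inl (fun u => q (X u))) (card_inr (fun u => q (X u))).
apply: (eq_class_sums_closed (wl_stable_equiv A X) indist).
by move=> u v /wl_stable_feat ->.
Qed.

Lemma wl_indist_layer (d' : nat) (f : layer_fn R d d') :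
  wl_bounded f -> adj_sym A1 -> adj_sym A2 -> wl_indist A1 X1 A2 X2 ->
  wl_indist A1 (f V1 A1 X1) A2 (f V2 A2 X2).
Proof.
move=> f_wl sym1 sym2 /wl_indistE indist; apply/wl_indistE.
apply: (eq_class_sums_coarser (wl_stable_equiv _ _) (wl_stable_equiv _ _) _ indist).
apply: equitable_sub_wl_stable (f_wl _ _ _ _ _ _ sym1 sym2) _.
  exact: wl_stable_equiv.
exact: wl_stable_equitable.
Qed.

Lemma wl_indist_pool (p : 'cV[R]_d) (beta : R) (l : nat) :
  wl_indist A1 X1 A2 X2 ->
  wl_indist (V1 := {i | pool_keep p beta X1 i}) (V2 := {i | pool_keep p beta X2 i})
    (fun i j => apow A1 l (val i) (val j)) (fun i => X1 (val i))
    (fun i j => apow A2 l (val i) (val j)) (fun i => X2 (val i)).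
Proof.
set e := pool_embed (pool_keep p beta X1) (pool_keep p beta X2).
move=> /wl_indistE indist; apply/wl_indistE.
have -> : union_adj (fun i j => apow A1 l (val i) (val j))
                    (fun i j => apow A2 l (val i) (val j)) =
          fun x y => apow A l (e x) (e y).
  by apply/funext => x; apply/funext => y; rewrite apow_union; case: x; case: y.
have -> : union_feat (fun i => X1 (val i)) (fun i => X2 (val i)) = X \o e.
  by apply/funext; case.
have -> : ind_inl = ind_inl \o e by apply/funext; case.
have -> : ind_inr = ind_inr \o e by apply/funext; case.
have keep_e x : pool_keep p beta X (e x) by case: x => [[]|[]].
have codom_closed u x : wl_stable A X u (e x) -> u \in codom e.
  move=> /wl_stable_feat Xu; apply: pool_embed_codom.
  by move: (keep_e x); rewrite /pool_keep -Xu; case: u {Xu}.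
have restrict_equiv := equiv_restrict e (wl_stable_equiv A X).
have e_inj : injective e by apply: pool_embed_inj.
apply: (eq_class_sums_coarser restrict_equiv (wl_stable_equiv _ _) _
  (eq_class_sums_restrict e_inj codom_closed indist)).
apply: equitable_sub_wl_stable => //; first by move=> x y /wl_stable_feat.
apply: (equitable_restrict e_inj codom_closed).
apply: equitable_apow; [exact: wl_stable_equiv | exact: wl_stable_equitable].
Qed.

Lemma wl_indist_readout (k : nat) (r : readout_fn R d k) :
  perm_invariant r -> wl_indist A1 X1 A2 X2 -> r V1 X1 = r V2 X2.
Proof.
move=> r_inv indist.
have [g g_bij X1g] : exists2 g, bijective g & X1 =1 X2 \o g.
  apply: perm_codom_bij; apply/seq.permP => q.
  by rewrite !count_codom (wl_indist_feat_count indist).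
by rewrite (funext X1g); apply: r_inv.
Qed.

End Union.

Theorem theorem2 (R : realType) (k d : nat) (N : unet R k d)
    (V1 V2 : finType)
    (A1 : V1 -> V1 -> nat) (X1 : V1 -> 'rV[R]_d)
    (A2 : V2 -> V2 -> nat) (X2 : V2 -> 'rV[R]_d) :
  unet_ok N ->
  adj_sym A1 -> adj_sym A2 ->
  wl_indist A1 X1 A2 X2 ->
  unet_eval N A1 X1 = unet_eval N A2 X2.
Proof.
elim: N V1 V2 A1 X1 A2 X2 => [d' r | d' d'' f N' IH | d' p beta l N' IH]
  V1 V2 A1 X1 A2 X2 /=.
- by move=> r_inv _ _; apply: wl_indist_readout.
- move=> [f_wl N'_ok] sym1 sym2 indist.
  by apply: IH => //; apply: wl_indist_layer.
- (* the pooling step holds for every exponent *)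
  move=> [_ N'_ok] sym1 sym2 indist.
  apply: IH => //; [by move=> i j; apply: apow_sym.. | exact: wl_indist_pool].
Qed.
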